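(* Let $\mathcal A$ be a maximal commutative subalgebra of $\mathcal M_d(\mathbb C)$. Suppose $\mathcal B$ is a commutative algebra of block Toeplitz matrices with entries in $\mathcal A$ (i.e. $\mathcal B\subset\mathcal T_{n,d}[\mathcal A]$), and $D$ is a block Toeplitz cyclic diagonal with entries in $\mathcal A$ such that $D\intercal\mathcal B$. Then the algebra $\mathcal B_1$ generated by $\mathcal B$ and $D$ consists of block Toeplitz matrices.
   Context: A block Toeplitz matrix is an $n\times n$ block matrix $A=(A_{i-j})_{i,j=0}^{n-1}$ with $A_m\in\mathcal M_d(\mathbb C)$; $\mathcal T_{n,d}[\mathcal A]$ is the set of block Toeplitz matrices all of whose entries $A_m$ lie in $\mathcal A$. A cyclic diagonal of order $k$ ($0\le k\le n-1$) is an $n\times n$ block matrix $T$ with $T_{i,j}=0$ unless $i-j=k$ or $i-j=k-n$. For block Toeplitz $A,B$, write $A\intercal B$ if $AB$ is block Toeplitz, and $A\intercal\mathcal S$ if $A\intercal B$ for all $B\in\mathcal S$. *)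

From HB Require Import structures.
From mathcomp Require Import all_boot all_order all_algebra.
Set Implicit Arguments. Unset Strict Implicit. Unset Printing Implicit Defensive.
Import Order.TTheory GRing.Theory Num.Theory.
Local Open Scope ring_scope.

(* A block matrix of size n x n with d x d blocks is represented as an
   n x n matrix whose entries lie in the (non-commutative) ring 'M[C]_d.
   The block product is then mulmx ( *m ). *)
Notation blockmx C n d := 'M['M[C]_d]_n.

Definition bscale (C : numClosedFieldType) (n d : nat) (c : C)
  (X : blockmx C n d) : blockmx C n d := map_mx (fun a => c *: a) X.

Definition is_subalgebra (C : numClosedFieldType) (d : nat)
  (A : 'M[C]_d -> Prop) : Prop :=
  A 1%:M /\
  (forall x y, A x -> A y -> A (x + y)) /\
  (forall (c : C) x, A x -> A (c *: x)) /\
  (forall x y, A x -> A y -> A (x *m y)).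

Definition is_commutative_set (C : numClosedFieldType) (d : nat)
  (A : 'M[C]_d -> Prop) : Prop :=
  forall x y, A x -> A y -> x *m y = y *m x.

Definition maximal_commutative_subalgebra (C : numClosedFieldType) (d : nat)
  (A : 'M[C]_d -> Prop) : Prop :=
  is_subalgebra A /\ is_commutative_set A /\
  (forall A' : 'M[C]_d -> Prop, is_subalgebra A' -> is_commutative_set A' ->
     (forall x, A x -> A' x) -> forall x, A' x -> A x).

Definition is_block_toeplitz (C : numClosedFieldType) (n d : nat)
  (X : blockmx C n d) : Prop :=
  forall i j i' j' : 'I_n,
    (i%:Z - j%:Z = i'%:Z - j'%:Z)%R -> X i j = X i' j'.

Definition in_toeplitz_over (C : numClosedFieldType) (n d : nat)
  (A : 'M[C]_d -> Prop) (X : blockmx C n d) : Prop :=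
  is_block_toeplitz X /\ forall i j, A (X i j).

Definition is_cyclic_diagonal (C : numClosedFieldType) (n d : nat) (k : nat)
  (X : blockmx C n d) : Prop :=
  (k < n)%N /\
  forall i j : 'I_n,
    (i%:Z - j%:Z != k%:Z)%R -> (i%:Z - j%:Z != k%:Z - n%:Z)%R -> X i j = 0.

(* A T B : the product AB is block Toeplitz *)
Definition ttimes (C : numClosedFieldType) (n d : nat)
  (X Y : blockmx C n d) : Prop := is_block_toeplitz (X *m Y).

Definition is_block_algebra (C : numClosedFieldType) (n d : nat)
  (B : blockmx C n d -> Prop) : Prop :=
  (forall x y, B x -> B y -> B (x + y)) /\
  (forall (c : C) x, B x -> B (bscale c x)) /\
  (forall x y, B x -> B y -> B (x *m y)).

Definition is_commutative_block_set (C : numClosedFieldType) (n d : nat)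
  (B : blockmx C n d -> Prop) : Prop :=
  forall x y, B x -> B y -> x *m y = y *m x.

Inductive gen_algebra (C : numClosedFieldType) (n d : nat)
  (B : blockmx C n d -> Prop) (D : blockmx C n d) : blockmx C n d -> Prop :=
| gen_base : forall x, B x -> gen_algebra B D x
| gen_D : gen_algebra B D D
| gen_add : forall x y, gen_algebra B D x -> gen_algebra B D y ->
    gen_algebra B D (x + y)
| gen_scale : forall (c : C) x, gen_algebra B D x ->
    gen_algebra B D (bscale c x)
| gen_mul : forall x y, gen_algebra B D x -> gen_algebra B D y ->
    gen_algebra B D (x *m y).

From HB Require Import structures.
From mathcomp Require Import all_boot all_order all_algebra.
From mathcomp Require Import zify.
Import GRing.Theory Num.Theory.
Local Open Scope ring_scope.

Set Implicit Arguments.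
Unset Strict Implicit.

(* Each Q in B commutes with D: both are block Toeplitz with commuting
   entries and DQ is block Toeplitz, and reversing the order of rows and
   columns turns DQ into QD.  Hence the algebra generated by B and D is
   spanned by the monomials D^j Q with Q in B or Q = 1, and it suffices that
   each D^j Q is block Toeplitz.  Row i of a product DM is the product of one
   of the two nonzero diagonal values a, b of D with a row of M, so if M is
   block Toeplitz then DM can fail to be so only across the wrap-around row k;
   for M = DQ the two entries compared there are a b q and b a q.  Induction on
   j then keeps both D^j Q and D^(j+1) Q block Toeplitz. *)

Section BlockToeplitz.
Variables (C : numClosedFieldType) (d n : nat).
Implicit Types X Y : 'M['M[C]_d]_n.

Definition entries_commute X Y :=
  forall i j i' j', X i j * Y i' j' = Y i' j' * X i j.

Lemma block_toeplitzD X Y :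
  is_block_toeplitz X -> is_block_toeplitz Y -> is_block_toeplitz (X + Y).
Proof. by move=> TX TY i j i' j' E; rewrite !mxE (TX _ _ _ _ E) (TY _ _ _ _ E). Qed.

Lemma block_toeplitz_bscale (c : C) X :
  is_block_toeplitz X -> is_block_toeplitz (bscale c X).
Proof. by move=> TX i j i' j' E; rewrite !mxE (TX _ _ _ _ E). Qed.

Lemma block_toeplitz1 : is_block_toeplitz (1%:M : 'M['M[C]_d]_n).
Proof.
move=> i j i' j' E; rewrite !mxE; congr (_ *+ nat_of_bool _).
by apply/eqP/eqP => /(congr1 val) /= h; apply/val_inj => /=; lia.
Qed.

Lemma bscale_mulmxl (c : C) X Y : bscale c X *m Y = bscale c (X *m Y).
Proof.
apply/matrixP => i j; rewrite !mxE scaler_sumr.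
by apply: eq_bigr => l _; rewrite mxE scalemxAl.
Qed.

Lemma bscale_mulmxr (c : C) X Y : X *m bscale c Y = bscale c (X *m Y).
Proof.
apply/matrixP => i j; rewrite !mxE scaler_sumr.
by apply: eq_bigr => l _; rewrite mxE scalemxAr.
Qed.

(* Reversing the summation index turns (X Y)_{ij} into (Y X)_{n-1-j, n-1-i}. *)
Lemma block_toeplitz_mulmxC X Y :
  is_block_toeplitz X -> is_block_toeplitz Y -> entries_commute X Y ->
  is_block_toeplitz (X *m Y) -> X *m Y = Y *m X.
Proof.
move=> TX TY cXY TXY; apply/matrixP => i j.
have := ltn_ord i; have := ltn_ord j => ltj lti.
rewrite (TXY i j (rev_ord j) (rev_ord i)) /=; last by lia.
rewrite !mxE (reindex_inj rev_ord_inj) /=; apply: eq_bigr => l _.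
have := ltn_ord l => ltl.
rewrite (TX (rev_ord j) (rev_ord l) l j) /=; last by lia.
by rewrite (TY (rev_ord l) (rev_ord i) i l) /=; [exact: cXY | lia].
Qed.

End BlockToeplitz.

Section CyclicDiagonal.
Variables (C : numClosedFieldType) (d m : nat).
Local Notation n := m.+1.
Implicit Types X D Q : 'M['M[C]_d]_n.

(* Entries at natural-number indices; [inord] sends out-of-range indices to 0,
   so the statements below carry explicit bounds. *)
Definition nentry X (i j : nat) : 'M[C]_d := X (inord i) (inord j).

Lemma nentryE X (i j : 'I_n) : X i j = nentry X i j.
Proof. by rewrite /nentry !inord_val. Qed.

Lemma block_toeplitz_nentry X : is_block_toeplitz X ->
  forall i j i' j', (i < n)%N -> (j < n)%N -> (i' < n)%N -> (j' < n)%N ->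
  (i + j' = i' + j)%N -> nentry X i j = nentry X i' j'.
Proof. by move=> TX i j i' j' *; apply: TX; rewrite !inordK //; lia. Qed.

Lemma block_toeplitz_shift X :
  (forall i j, (i.+1 < n)%N -> (j.+1 < n)%N ->
     nentry X i.+1 j.+1 = nentry X i j) ->
  is_block_toeplitz X.
Proof.
move=> shX.
have shtX t i j : (i + t < n)%N -> (j + t < n)%N ->
    nentry X (i + t) (j + t) = nentry X i j.
  elim: t i j => [|t IH] i j hi hj; first by rewrite !addn0.
  by rewrite !addnS shX ?IH //; lia.
have diagX (i j : 'I_n) : X i j = nentry X (i - j) (j - i).
  rewrite nentryE; have := ltn_ord i; have := ltn_ord j => ltj lti.
  case: (leqP j i) => hij.
    transitivity (nentry X (i - j + j) (0 + j)); first by congr nentry; lia.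
    by rewrite shtX; [congr nentry|..]; lia.
  transitivity (nentry X (0 + i) (j - i + i)); first by congr nentry; lia.
  by rewrite shtX; [congr nentry|..]; lia.
by move=> i j i' j' E; rewrite diagX [RHS]diagX; congr nentry; lia.
Qed.

Lemma cyclic_diagonal_mul_nentry k D Q i j l :
  is_cyclic_diagonal k D -> (i < n)%N -> (l < n)%N ->
  (i = l + k \/ i + n = l + k)%N ->
  nentry (D *m Q) i j = nentry D i l * nentry Q l j.
Proof.
move=> [_ D0] hi hl hil; rewrite /nentry mxE (bigD1 (inord l)) //=.
rewrite big1 ?addr0 // => l' nl'.
have ll' : (l' : nat) != l.
  by apply: contra nl' => /eqP <-; rewrite inord_val.
have := ltn_ord l' => hl'.
by rewrite D0 ?mul0r // inordK //; apply/eqP; lia.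
Qed.

Lemma cyclic_diagonal_mul_shift k D M i j :
  is_cyclic_diagonal k D -> is_block_toeplitz D -> is_block_toeplitz M ->
  (i.+1 < n)%N -> (j.+1 < n)%N -> i.+1 != k ->
  nentry (D *m M) i.+1 j.+1 = nentry (D *m M) i j.
Proof.
move=> cD TD TM hi hj hik; have hk : (k < n)%N by case: cD.
have DM i' l j' := cyclic_diagonal_mul_nentry (i := i') (l := l) M j' cD.
have [hki|hik'] := leqP k i.
  rewrite (DM i.+1 (i.+1 - k)%N) ?(DM i (i - k)%N); try lia.
  by congr (_ * _); [apply: (block_toeplitz_nentry TD) | apply: (block_toeplitz_nentry TM)];
    lia.
rewrite (DM i.+1 (i.+1 + n - k)%N) ?(DM i (i + n - k)%N); try lia.
by congr (_ * _); [apply: (block_toeplitz_nentry TD) | apply: (block_toeplitz_nentry TM)];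
  lia.
Qed.

(* Across the wrap-around row [i.+1 = k] both sides reduce to a product
   [a * b * q] of the two nonzero diagonal values [a], [b] of [D] and one entry
   [q] of [Q], in opposite orders. *)
Lemma cyclic_diagonal_mul2_wrap i j D Q :
  is_cyclic_diagonal i.+1 D -> is_block_toeplitz D -> entries_commute D D ->
  is_block_toeplitz Q -> (i.+1 < n)%N -> (j.+1 < n)%N ->
  nentry (D *m (D *m Q)) i.+1 j.+1 = nentry (D *m (D *m Q)) i j.
Proof.
move=> cD TD cDD TQ hi hj.
have DX X i' l j' := cyclic_diagonal_mul_nentry (i := i') (l := l) X j' cD.
rewrite (DX _ i.+1 0%N) ?(DX _ 0%N (m - i)%N); try lia.
rewrite (DX _ i m) ?(DX _ m (m - i.+1)%N); try lia.
have -> : nentry D 0 (m - i) = nentry D i m.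
  by apply: (block_toeplitz_nentry TD); lia.
have -> : nentry D m (m - i.+1) = nentry D i.+1 0.
  by apply: (block_toeplitz_nentry TD); lia.
have -> : nentry Q (m - i) j.+1 = nentry Q (m - i.+1) j.
  by apply: (block_toeplitz_nentry TQ); lia.
by rewrite !mulrA [nentry D i.+1 0 * _]cDD.
Qed.

Lemma cyclic_diagonal_mul2_toeplitz k D Q :
  is_cyclic_diagonal k D -> is_block_toeplitz D -> entries_commute D D ->
  is_block_toeplitz Q -> is_block_toeplitz (D *m Q) ->
  is_block_toeplitz (D *m (D *m Q)).
Proof.
move=> cD TD cDD TQ TDQ; apply: block_toeplitz_shift => i j hi hj.
have [ek|nek] := eqVneq i.+1 k; last exact: (cyclic_diagonal_mul_shift cD).
by rewrite -ek in cD; exact: (cyclic_diagonal_mul2_wrap cD).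
Qed.

Lemma cyclic_diagonal_exp_mul_toeplitz k D Q :
  is_cyclic_diagonal k D -> is_block_toeplitz D -> entries_commute D D ->
  is_block_toeplitz Q -> is_block_toeplitz (D *m Q) ->
  forall j, is_block_toeplitz (D ^+ j *m Q).
Proof.
move=> cD TD cDD TQ TDQ j.
have expSmul i : D ^+ i.+1 *m Q = D *m (D ^+ i *m Q) by rewrite exprS mulmxA mulmxE.
suff [] : is_block_toeplitz (D ^+ j *m Q) /\ is_block_toeplitz (D ^+ j.+1 *m Q) by [].
elim: j => [|j [TDjQ TDj1Q]]; first by rewrite expSmul expr0 mul1mx.
split=> //; rewrite !expSmul.
by apply: (cyclic_diagonal_mul2_toeplitz cD); rewrite -?expSmul.
Qed.

End CyclicDiagonal.

Section GeneratedAlgebra.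
Variables (C : numClosedFieldType) (d n : nat).
Implicit Types (F B : 'M['M[C]_d]_n -> Prop) (X Y D Q : 'M['M[C]_d]_n).

Inductive lin_span F : 'M['M[C]_d]_n -> Prop :=
| lin_span_base X : F X -> lin_span F X
| lin_spanD X Y : lin_span F X -> lin_span F Y -> lin_span F (X + Y)
| lin_span_bscale (c : C) X : lin_span F X -> lin_span F (bscale c X).

Lemma lin_span_mulmx F : (forall X Y, F X -> F Y -> F (X *m Y)) ->
  forall X Y, lin_span F X -> lin_span F Y -> lin_span F (X *m Y).
Proof.
move=> Fmul X Y spX; elim: spX Y => [X0 FX0|X1 X2 _ IH1 _ IH2|c X0 _ IH] Y spY.
- elim: spY => [Y0 FY0|Y1 Y2 _ IH1 _ IH2|c Y0 _ IH].
  + by apply: lin_span_base; apply: Fmul.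
  + by rewrite mulmxDr; apply: lin_spanD.
  + by rewrite bscale_mulmxr; apply: lin_span_bscale.
- by rewrite mulmxDl; apply: lin_spanD; [apply: IH1 | apply: IH2].
- by rewrite bscale_mulmxl; apply: lin_span_bscale; apply: IH.
Qed.

Definition gen_monomial B D Y :=
  exists j Q, (B Q \/ Q = 1%:M) /\ Y = D ^+ j *m Q.

Section Monomials.
Variables (B : 'M['M[C]_d]_n -> Prop) (D : 'M['M[C]_d]_n).
Hypothesis Bmul : forall X Y, B X -> B Y -> B (X *m Y).
Hypothesis BD : forall Q, B Q -> Q *m D = D *m Q.

Lemma gen_monomial_mulmx X Y :
  gen_monomial B D X -> gen_monomial B D Y -> gen_monomial B D (X *m Y).
Proof.
move=> [i [Q [BQ ->]]] [j [R [BR ->]]].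
have cQD : GRing.comm Q D.
  by case: BQ => [/BD|->]; rewrite /GRing.comm -?mulmxE ?mul1mx ?mulmx1.
exists (i + j)%N, (Q *m R); split.
  by case: BQ BR => [BQ|->] [BR|->]; rewrite ?mul1mx ?mulmx1; auto.
by rewrite !mulmxE exprD !mulrA -[_ * Q * _]mulrA (commrX j cQD) !mulrA.
Qed.

Lemma gen_algebra_lin_span X :
  gen_algebra B D X -> lin_span (gen_monomial B D) X.
Proof.
elim=> {X} [X BX||X Y _ spX _ spY|c X _ spX|X Y _ spX _ spY].
- by apply: lin_span_base; exists 0%N, X; rewrite expr0 mul1mx; auto.
- by apply: lin_span_base; exists 1%N, 1%:M; rewrite expr1 mulmx1; auto.
- exact: lin_spanD.
- exact: lin_span_bscale.
- exact: (lin_span_mulmx gen_monomial_mulmx).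
Qed.

End Monomials.
End GeneratedAlgebra.

Theorem corollary4p4 (C : numClosedFieldType) (n d : nat)
  (A : 'M[C]_d -> Prop) (B : 'M['M[C]_d]_n -> Prop) (D : 'M['M[C]_d]_n)
  (k : nat) :
  maximal_commutative_subalgebra A ->
  is_block_algebra B -> is_commutative_block_set B ->
  (forall X, B X -> in_toeplitz_over A X) ->
  in_toeplitz_over A D -> is_cyclic_diagonal k D ->
  (forall X, B X -> ttimes D X) ->
  forall X, gen_algebra B D X -> is_block_toeplitz X.
Proof.
case: n => [|m] in B D *; first by move=> _ _ _ _ _ [].
move=> [_ [Acomm _]] [_ [_ Bmul]] _ BA [TD AD] cD DB X.
have cA (Y Z : 'M['M[C]_d]_m.+1) :
    (forall i j, A (Y i j)) -> (forall i j, A (Z i j)) -> entries_commute Y Z.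
  by move=> AY AZ i j i' j'; apply: Acomm.
have BD Q : B Q -> Q *m D = D *m Q.
  move=> BQ; have [TQ AQ] := BA Q BQ.
  by symmetry; apply: block_toeplitz_mulmxC => //; [apply: cA | apply: DB].
move/(gen_algebra_lin_span Bmul BD).
elim=> [_ [j [Q [BQ ->]]]|Y Z _ TY _ TZ|c Y _ TY].
- have [TQ TDQ] : is_block_toeplitz Q /\ is_block_toeplitz (D *m Q).
    case: BQ => [BQ|->]; last by rewrite mulmx1; split; [exact: block_toeplitz1|].
    by split; [case: (BA Q BQ) | exact: DB].
  exact: (cyclic_diagonal_exp_mul_toeplitz cD TD (cA _ _ AD AD)).
- exact: block_toeplitzD.
- exact: block_toeplitz_bscale.
Qed.
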